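(* Let $n\geq2$, $m\geq1$ be integers, $\alpha,\beta\in\mathbb{C}$, $1\leq k\leq n/2$, and assume $|\beta-\alpha|>\cos\phi_k$. Then $$\big(\widetilde D_k\cap B_{\cos\phi_k}(0)\big)\cup\big(\widetilde E_k\cap R_{|\beta-\alpha|,k}\cap X\big)=B_{\cos\phi_k}(0)\cup\big(\widetilde E_k\cap R_{|\beta-\alpha|,k}\cap X\big),$$ where $X=\mathbb{C}$ if $k\leq m$ and $X=B_{\cos\psi_{k,m}}(0)$ if $k>m$. Moreover, each of the two lines $\{x+iy:\ x\cos\delta_k+y\sin\delta_k=|\beta-\alpha|\cos\delta_k\}$ and $\{x+iy:\ x\cos\delta_k-y\sin\delta_k=|\beta-\alpha|\cos\delta_k\}$ is tangent to the circle $x^2+y^2=\cos^2\phi_k$.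
   Context: $\phi_k=\frac{k\pi}{n+1}$, $\psi_{k,m}=\frac{(k-m)\pi}{n+1}$. $D_k=\{\theta\in\mathbb{R}:\ |\beta-\alpha|\cos\theta\leq\cos\phi_k\}$. $\delta_k=\arccos(\cos\phi_k/|\beta-\alpha|)\in[0,\pi]$ if $\beta\neq\alpha$ and $|\beta-\alpha|\geq|\cos\phi_k|$, and $\delta_k=0$ otherwise. $\widetilde D_k=\{\mu\in\mathbb{C}:\ \arg\mu\in D_k\}$ and $\widetilde E_k=\{\mu\in\mathbb{C}:\ \arg\mu\notin D_k\}$. $B_r(\lambda)$ is the closed disk of radius $r$ centered at $\lambda$. For $r\geq0$, $R_{r,k}=\{x+iy:\ x\leq r,\ (x-r)\cot\delta_k\leq y\leq(r-x)\cot\delta_k\}$. *)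

From Stdlib Require Import Reals ClassicalEpsilon.
From Coquelicot Require Import Coquelicot.
Open Scope R_scope.

Definition phi (n k : nat) : R := INR k * PI / INR (n + 1).
Definition psi (n k m : nat) : R := (INR k - INR m) * PI / INR (n + 1).

Definition Dk (n k : nat) (alpha beta : C) (theta : R) : Prop :=
  Cmod (beta - alpha)%C * cos theta <= cos (phi n k).

Definition delta (n k : nat) (alpha beta : C) : R :=
  if excluded_middle_informative
       (beta <> alpha /\ Cmod (beta - alpha)%C >= Rabs (cos (phi n k)))
  then acos (cos (phi n k) / Cmod (beta - alpha)%C)
  else 0.

(* principal argument in (-pi, pi]; convention arg 0 = 0 *)
Definition Carg (z : C) : R :=
  if excluded_middle_informative (z = 0%C) then 0
  else if Rle_dec 0 (Im z) then acos (Re z / Cmod z)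
  else - acos (Re z / Cmod z).

Definition tDk (n k : nat) (alpha beta : C) (mu : C) : Prop :=
  Dk n k alpha beta (Carg mu).
Definition tEk (n k : nat) (alpha beta : C) (mu : C) : Prop :=
  ~ Dk n k alpha beta (Carg mu).

Definition Ball (r : R) (lambda : C) (mu : C) : Prop :=
  Cmod (mu - lambda)%C <= r.

Definition Rregion (n k : nat) (alpha beta : C) (r : R) (mu : C) : Prop :=
  let d := delta n k alpha beta in
  let x := Re mu in let y := Im mu in
  x <= r /\ (x - r) * (cos d / sin d) <= y /\ y <= (r - x) * (cos d / sin d).

Definition Xset (n k m : nat) (mu : C) : Prop :=
  if Nat.leb k m then True else Ball (cos (psi n k m)) 0%C mu.

Definition tangent (L S : C -> Prop) : Prop :=
  exists! z : C, L z /\ S z.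

From Stdlib Require Import Reals Lra Lia Classical ClassicalEpsilon.
From Coquelicot Require Import Coquelicot.
Open Scope R_scope.

(* Since 2k <= n, c := cos phi_k is positive, and r := |beta - alpha| > c
   makes delta_k = arccos (c / r) an angle in (0, pi/2) with r cos delta_k = c.
   The two lines x cos delta_k +- y sin delta_k = r cos delta_k then have unit
   normals and lie at distance c from the origin, so they touch the circle of
   radius c, and by Cauchy-Schwarz the disk B_c(0) lies in both half-planes
   that cut out R_{r,k}.  Since 0 <= psi_{k,m} <= phi_k <= pi, the disk also
   lies in X.  Hence every point of B_c(0) outside tilde D_k already belongs to
   the second member of both unions, which gives the set identity. *)

Lemma cos_phi_pos (n k : nat) : (2 * k <= n)%nat -> 0 < cos (phi n k).
Proof.
  intros Hkn. unfold phi.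
  assert (HN : 2 * INR k + 1 <= INR (n + 1)).
  { replace (2 * INR k + 1) with (INR (2 * k + 1)) by (rewrite plus_INR, mult_INR; simpl; ring).
    apply le_INR; lia. }
  assert (Hk : 0 <= INR k) by apply pos_INR.
  pose proof PI_RGT_0.
  assert (Ha : 0 < PI / INR (n + 1)) by (apply Rdiv_lt_0_compat; lra).
  assert (HaN : PI / INR (n + 1) * INR (n + 1) = PI) by (field; lra).
  apply cos_gt_0; unfold Rdiv in *; nra.
Qed.

Lemma cos_phi_le_cos_psi (n k m : nat) :
  (m <= k)%nat -> (k <= n + 1)%nat -> cos (phi n k) <= cos (psi n k m).
Proof.
  intros Hmk Hkn. unfold phi, psi.
  assert (HkN : INR k <= INR (n + 1)) by (apply le_INR; lia).
  assert (Hmk' : INR m <= INR k) by (apply le_INR; lia).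
  assert (Hm : 0 <= INR m) by apply pos_INR.
  pose proof PI_RGT_0.
  assert (Ha : 0 < PI / INR (n + 1)) by (apply Rdiv_lt_0_compat; [lra | apply lt_0_INR; lia]).
  assert (HaN : PI / INR (n + 1) * INR (n + 1) = PI) by (field; apply not_0_INR; lia).
  unfold Rdiv in *. apply cos_decr_1; nra.
Qed.

Lemma Ball0_Cmod (r : R) (z : C) : Ball r 0 z <-> Cmod z <= r.
Proof. unfold Ball. replace (z - 0)%C with z by ring. tauto. Qed.

Lemma Ball_sub_Xset (n k m : nat) (mu : C) :
  (k <= n + 1)%nat -> Ball (cos (phi n k)) 0 mu -> Xset n k m mu.
Proof.
  intros Hkn HB. unfold Xset.
  destruct (Nat.leb_spec k m) as [_ | Hmk]; [exact I |].
  rewrite Ball0_Cmod in HB |- *.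
  apply Rle_trans with (1 := HB), cos_phi_le_cos_psi; lia.
Qed.

Lemma dot_unit_le_Cmod (z : C) (u v : R) :
  u ^ 2 + v ^ 2 = 1 -> Re z * u + Im z * v <= Cmod z.
Proof.
  intros Huv.
  assert (Hw : Cmod (u, v) = 1) by (unfold Cmod; cbn [fst snd]; rewrite Huv; apply sqrt_1).
  replace (Re z * u + Im z * v) with (Re (z * Cconj (u, v))) by (destruct z; simpl; ring).
  rewrite <- (Rmult_1_r (Cmod z)), <- Hw, <- (Cmod_conj (u, v)), <- Cmod_mult.
  apply Rle_trans with (2 := re_le_Cmod _), Rle_abs.
Qed.

Lemma tangent_ext (L L' S : C -> Prop) :
  (forall z, L z <-> L' z) -> tangent L S -> tangent L' S.
Proof.
  intros HL [z0 [Hz0 Huniq]]. exists z0. split.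
  - rewrite <- HL. exact Hz0.
  - intros z [Hz HSz]. apply Huniq. rewrite HL. auto.
Qed.

Lemma tangent_line_circle (u v c : R) : u ^ 2 + v ^ 2 = 1 ->
  tangent (fun z : C => Re z * u + Im z * v = c)
          (fun z : C => Re z ^ 2 + Im z ^ 2 = c ^ 2).
Proof.
  intros Huv. exists (c * u, c * v). split.
  - cbv beta; unfold Re, Im; cbn [fst snd]. split.
    + transitivity (c * (u ^ 2 + v ^ 2)); [ring | rewrite Huv; ring].
    + transitivity (c ^ 2 * (u ^ 2 + v ^ 2)); [ring | rewrite Huv; ring].
  - intros [x y] [Hline Hcircle]; unfold Re, Im in Hline, Hcircle; cbn [fst snd] in Hline, Hcircle.
    assert (Hdist : (x - c * u) ^ 2 + (y - c * v) ^ 2 = 0).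
    { replace ((x - c * u) ^ 2 + (y - c * v) ^ 2)
        with (x ^ 2 + y ^ 2 - 2 * c * (x * u + y * v) + c ^ 2 * (u ^ 2 + v ^ 2)) by ring.
      rewrite Hcircle, Hline, Huv. ring. }
    pose proof (pow2_ge_0 (x - c * u)). pose proof (pow2_ge_0 (y - c * v)).
    assert (Hx : x = c * u) by nra.
    assert (Hy : y = c * v) by nra.
    rewrite Hx, Hy. reflexivity.
Qed.

Lemma cos_sin_unit (d : R) : cos d ^ 2 + sin d ^ 2 = 1.
Proof. rewrite <- (sin2_cos2 d). unfold Rsqr. ring. Qed.

Lemma Rregion_of_halfplanes (n k : nat) (alpha beta : C) (r : R) (mu : C) :
  let d := delta n k alpha beta in
  0 < cos d -> 0 < sin d ->
  Re mu * cos d + Im mu * sin d <= r * cos d ->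
  Re mu * cos d - Im mu * sin d <= r * cos d ->
  Rregion n k alpha beta r mu.
Proof.
  intros d Hco Hsi Hplus Hminus. unfold Rregion. fold d.
  set (x := Re mu) in *. set (y := Im mu) in *.
  assert (Hcot : cos d / sin d * sin d = cos d) by (field; lra).
  split; [nra | split; apply Rmult_le_reg_r with (sin d); nra].
Qed.

Section DeltaFacts.

Variables (n k : nat) (alpha beta : C).
Hypothesis cos_phi_gt0 : 0 < cos (phi n k).
Hypothesis cos_phi_lt_dist : cos (phi n k) < Cmod (beta - alpha).

Let c := cos (phi n k).
Let r := Cmod (beta - alpha).

Lemma cos_phi_div_dist_bounds : 0 < c / r < 1.
Proof.
  split; [apply Rdiv_lt_0_compat; unfold c, r; lra |].
  apply Rmult_lt_reg_r with r; [unfold r, c in *; lra |].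
  unfold Rdiv. rewrite Rmult_assoc, Rinv_l; unfold r, c in *; lra.
Qed.

Lemma delta_acos : delta n k alpha beta = acos (c / r).
Proof.
  unfold delta. destruct (excluded_middle_informative _) as [_ | Hnot]; [reflexivity |].
  exfalso. apply Hnot. split.
  - intros ->. unfold Cminus in cos_phi_lt_dist.
    rewrite Cplus_opp_r, Cmod_0 in cos_phi_lt_dist. lra.
  - rewrite Rabs_pos_eq; lra.
Qed.

Lemma cos_delta : cos (delta n k alpha beta) = c / r.
Proof. pose proof cos_phi_div_dist_bounds. rewrite delta_acos. apply cos_acos. lra. Qed.

Lemma dist_mul_cos_delta : r * cos (delta n k alpha beta) = c.
Proof. rewrite cos_delta. field. unfold r, c in *. lra. Qed.

Lemma cos_delta_pos : 0 < cos (delta n k alpha beta).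
Proof. rewrite cos_delta. apply cos_phi_div_dist_bounds. Qed.

Lemma sin_delta_pos : 0 < sin (delta n k alpha beta).
Proof.
  pose proof cos_phi_div_dist_bounds. rewrite delta_acos, sin_acos by lra.
  apply sqrt_lt_R0. unfold Rsqr. nra.
Qed.

Lemma Ball_sub_Rregion (mu : C) : Ball c 0 mu -> Rregion n k alpha beta r mu.
Proof.
  intros HB. rewrite Ball0_Cmod in HB.
  pose proof (cos_sin_unit (delta n k alpha beta)) as Hunit.
  apply Rregion_of_halfplanes; [apply cos_delta_pos | apply sin_delta_pos | |];
    rewrite dist_mul_cos_delta.
  - apply Rle_trans with (2 := HB), dot_unit_le_Cmod, Hunit.
  - unfold Rminus. rewrite Ropp_mult_distr_r.
    apply Rle_trans with (2 := HB), dot_unit_le_Cmod. rewrite <- Hunit. ring.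
Qed.

End DeltaFacts.

Theorem proposition3p4 (n m k : nat) (alpha beta : C) :
  (2 <= n)%nat -> (1 <= m)%nat -> (1 <= k)%nat -> (2 * k <= n)%nat ->
  Cmod (beta - alpha)%C > cos (phi n k) ->
  (forall mu : C,
     ((tDk n k alpha beta mu /\ Ball (cos (phi n k)) 0%C mu)
      \/ (tEk n k alpha beta mu /\ Rregion n k alpha beta (Cmod (beta - alpha)%C) mu
          /\ Xset n k m mu))
     <->
     (Ball (cos (phi n k)) 0%C mu
      \/ (tEk n k alpha beta mu /\ Rregion n k alpha beta (Cmod (beta - alpha)%C) mu
          /\ Xset n k m mu)))
  /\
  (let d := delta n k alpha beta in
   let r := Cmod (beta - alpha)%C in
   let circle := fun z : C => Re z ^ 2 + Im z ^ 2 = cos (phi n k) ^ 2 in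
   tangent (fun z : C => Re z * cos d + Im z * sin d = r * cos d) circle
   /\ tangent (fun z : C => Re z * cos d - Im z * sin d = r * cos d) circle).
Proof.
  intros _ _ _ Hkn Hdist.
  pose proof (cos_phi_pos n k Hkn) as Hc.
  split.
  - intros mu. split.
    + intros [[_ HB] | HE]; [left | right]; assumption.
    + intros [HB | HE]; [| right; exact HE].
      destruct (classic (tDk n k alpha beta mu)) as [HD | HnD]; [left; split; assumption |].
      right. split; [exact HnD | split].
      * apply Ball_sub_Rregion; assumption.
      * apply Ball_sub_Xset; [lia | exact HB].
  - cbv zeta. rewrite dist_mul_cos_delta by assumption. split.
    + apply tangent_line_circle, cos_sin_unit.
    + apply tangent_ext with (fun z : C => Re z * cos (delta n k alpha beta)
                                        + Im z * - sin (delta n k alpha beta) = cos (phi n k)).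
      * intros z. split; intros H; lra.
      * apply tangent_line_circle. rewrite <- (cos_sin_unit (delta n k alpha beta)). ring.
Qed.
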